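(* Let $\gamma>0$, $\upsilon>0$ and $0<p_1<p_2<1$. Let $X\sim \mathrm{RBTLL}(\gamma,\upsilon,p_1)$ and $Y\sim \mathrm{RBTLL}(\gamma,\upsilon,p_2)$, with densities $f_X$ and $f_Y$. Then $X$ is smaller than $Y$ in the likelihood ratio order; that is, the function $x\mapsto f_X(x)/f_Y(x)$ is decreasing on $(0,\infty)$.
   Context: The log-logistic distribution with parameters $\gamma,\upsilon>0$ has CDF $G(x)=\frac{e^{\gamma}x^{\upsilon}}{1+e^{\gamma}x^{\upsilon}}$ and PDF $g(x)=\frac{e^{\gamma}\upsilon x^{\upsilon-1}}{(1+e^{\gamma}x^{\upsilon})^2}$, $x>0$. The record-based transmuted log-logistic distribution $\mathrm{RBTLL}(\gamma,\upsilon,p)$, with $\gamma,\upsilon>0$ and $0<p<1$, is the distribution on $(0,\infty)$ with CDF $F(x)=G(x)+p\,(1-G(x))\log(1-G(x))$ and PDF \[ f(x)=\frac{e^{\gamma}\upsilon x^{\upsilon-1}}{(1+e^{\gamma}x^{\upsilon})^2}\left[1+p\left(\log(1+e^{\gamma}x^{\upsilon})-1\right)\right],\qquad x>0. \] *)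

From Stdlib Require Import Reals.
Open Scope R_scope.

Definition rbtll_pdf (gamma upsilon p x : R) : R :=
  exp gamma * upsilon * Rpower x (upsilon - 1)
    / (1 + exp gamma * Rpower x upsilon) ^ 2
  * (1 + p * (ln (1 + exp gamma * Rpower x upsilon) - 1)).

(* The density factors as the log-logistic density g times the weight
   1 + p (H - 1), where H = -log (1 - G) = log (1 + e^gamma x^upsilon) is the
   cumulative hazard of the log-logistic law.  In the likelihood ratio the
   factor g cancels, leaving (1 - p1 + p1 H) / (1 - p2 + p2 H).  Since H is
   increasing and positive, it suffices that t |-> (1 - p1 + p1 t) / (1 - p2 + p2 t)
   decreases on (0, oo): cross-multiplying, the difference of the two products
   at s <= t is (p2 - p1) (t - s) >= 0. *)
From Stdlib Require Import Reals Lra.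
Open Scope R_scope.

Definition loglogistic_pdf (gamma upsilon x : R) : R :=
  exp gamma * upsilon * Rpower x (upsilon - 1)
    / (1 + exp gamma * Rpower x upsilon) ^ 2.

Definition loglogistic_cumhazard (gamma upsilon x : R) : R :=
  ln (1 + exp gamma * Rpower x upsilon).

Definition transmuted_weight (p t : R) : R := 1 + p * (t - 1).

Lemma rbtll_pdfE (gamma upsilon p x : R) :
  rbtll_pdf gamma upsilon p x =
  loglogistic_pdf gamma upsilon x
  * transmuted_weight p (loglogistic_cumhazard gamma upsilon x).
Proof. reflexivity. Qed.

Lemma loglogistic_pdf_pos (gamma upsilon x : R) :
  0 < upsilon -> 0 < loglogistic_pdf gamma upsilon x.
Proof.
  intros hu; unfold loglogistic_pdf, Rpower, Rdiv.
  pose proof (exp_pos gamma); pose proof (exp_pos ((upsilon - 1) * ln x)).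
  pose proof (exp_pos (upsilon * ln x)).
  apply Rmult_lt_0_compat.
  - apply Rmult_lt_0_compat; [apply Rmult_lt_0_compat|]; assumption.
  - apply Rinv_0_lt_compat, pow_lt; nra.
Qed.

Lemma loglogistic_cumhazard_pos (gamma upsilon x : R) :
  0 < loglogistic_cumhazard gamma upsilon x.
Proof.
  unfold loglogistic_cumhazard, Rpower.
  pose proof (exp_pos gamma); pose proof (exp_pos (upsilon * ln x)).
  rewrite <- ln_1; apply ln_increasing; nra.
Qed.

Lemma loglogistic_cumhazard_increasing (gamma upsilon x y : R) :
  0 < upsilon -> 0 < x -> x < y ->
  loglogistic_cumhazard gamma upsilon x < loglogistic_cumhazard gamma upsilon y.
Proof.
  intros hu hx hxy; unfold loglogistic_cumhazard.
  assert (Rpower x upsilon < Rpower y upsilon) by (apply Rlt_Rpower_l; lra).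
  pose proof (exp_pos gamma); pose proof (exp_pos (upsilon * ln x)).
  apply ln_increasing; unfold Rpower in *; nra.
Qed.

Lemma transmuted_weight_pos (p t : R) :
  0 <= p <= 1 -> 0 < t -> 0 < transmuted_weight p t.
Proof. unfold transmuted_weight; nra. Qed.

Lemma transmuted_weight_ratio_antitone (p1 p2 s t : R) :
  p1 <= p2 -> 0 <= p2 <= 1 -> 0 < s -> s <= t ->
  transmuted_weight p1 t / transmuted_weight p2 t
  <= transmuted_weight p1 s / transmuted_weight p2 s.
Proof.
  intros hp12 hp2 hs hst.
  pose proof (transmuted_weight_pos p2 s hp2 hs) as ws.
  pose proof (transmuted_weight_pos p2 t hp2 ltac:(lra)) as wt.
  assert (cross : transmuted_weight p1 t * transmuted_weight p2 s
                  <= transmuted_weight p1 s * transmuted_weight p2 t).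
  { unfold transmuted_weight; nra. }
  apply (Rmult_le_reg_r (transmuted_weight p2 s * transmuted_weight p2 t)).
  - nra.
  - replace (transmuted_weight p1 t / transmuted_weight p2 t
               * (transmuted_weight p2 s * transmuted_weight p2 t))
      with (transmuted_weight p1 t * transmuted_weight p2 s) by (field; lra).
    replace (transmuted_weight p1 s / transmuted_weight p2 s
               * (transmuted_weight p2 s * transmuted_weight p2 t))
      with (transmuted_weight p1 s * transmuted_weight p2 t) by (field; lra).
    exact cross.
Qed.

Lemma rbtll_pdf_ratio (gamma upsilon p1 p2 x : R) :
  0 < upsilon ->
  rbtll_pdf gamma upsilon p1 x / rbtll_pdf gamma upsilon p2 x
  = transmuted_weight p1 (loglogistic_cumhazard gamma upsilon x)
    / transmuted_weight p2 (loglogistic_cumhazard gamma upsilon x).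
Proof.
  intros hu; rewrite !rbtll_pdfE.
  set (g := loglogistic_pdf gamma upsilon x).
  assert (hg : g <> 0) by (apply Rgt_not_eq, loglogistic_pdf_pos, hu).
  unfold Rdiv; rewrite Rinv_mult.
  set (w1 := transmuted_weight p1 _); set (w2 := transmuted_weight p2 _).
  replace (g * w1 * (/ g * / w2)) with (w1 * / w2 * (g * / g)) by ring.
  rewrite Rinv_r by exact hg; ring.
Qed.

Theorem theorem1 (gamma upsilon p1 p2 : R)
  (hg : 0 < gamma) (hu : 0 < upsilon)
  (hp1 : 0 < p1) (hp12 : p1 < p2) (hp2 : p2 < 1) :
  forall x y : R, 0 < x -> x < y ->
    rbtll_pdf gamma upsilon p1 y / rbtll_pdf gamma upsilon p2 y
    <= rbtll_pdf gamma upsilon p1 x / rbtll_pdf gamma upsilon p2 x.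
Proof.
  intros x y hx hxy.
  rewrite !(rbtll_pdf_ratio gamma upsilon p1 p2 _ hu).
  apply transmuted_weight_ratio_antitone; try lra.
  - apply loglogistic_cumhazard_pos.
  - apply Rlt_le, loglogistic_cumhazard_increasing; assumption.
Qed.
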